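(* Let $(S,E,f)$ be a reduced and closed observation table for $U$ and $D$ as defined below, and suppose the marking of $\mathcal{T}_{S,f}$ fails. Then there are $s,t\in S$, $z,w\in\Sigma^*$ with $\delta_f^*(\epsilon,sz)=t$ and $\delta_f^*(\epsilon,tw)=s$, and nonempty $x,y\in\Sigma^+$ with $x^\omega,y^\omega\in E$, $s\in\mathrm{Inf}_{\mathcal{T}_{S,f}}(sx^\omega)$ and $t\in\mathrm{Inf}_{\mathcal{T}_{S,f}}(ty^\omega)$, such that $f(s,x^\omega)=\text{yes}$ and $f(t,y^\omega)=\text{no}$.
   Context: $\Sigma$ is a finite alphabet, $U\subseteq\Sigma^\omega$ recognizable by a weak deterministic Büchi automaton, $D\subseteq\Sigma^\omega$ regular with trivial right-congruence (for all $w\in\Sigma^*,\alpha$: $\alpha\in D\iff w\alpha\in D$). An observation table $(S,E,f)$ consists of a prefix-closed finite $S\subseteq\Sigma^*$, a suffix-closed finite set $E$ of ultimately periodic words with $E\cap D=\emptyset$, and $f:(S\cup S\Sigma)\times E\to\{\text{yes},\text{no}\}$ with $f(s,\alpha)=\text{yes}$ iff $s\alpha\in U$; $f_s(\alpha)=f(s,\alpha)$. Reduced: $f_s\neq f_t$ for distinct $s,t\in S$; closed: every $s\in S\Sigma$ has $t\in S$ with $f_s=f_t$. $\mathcal{T}_{S,f}=(\Sigma,S,\delta_f,\epsilon)$ with $\delta_f(s,\sigma)$ the unique $t\in S$ with $f_{s\sigma}=f_t$; $\delta_f^*$ is its extension to words; $\mathrm{Inf}_{\mathcal{T}_{S,f}}(\beta)$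 is the set of states visited infinitely often by the run of $\beta$ from $\epsilon$. Marking: for each $\alpha\in S\cdot E$, every state in $\mathrm{Inf}_{\mathcal{T}_{S,f}}(\alpha)$ is marked ''yes'' if $\alpha\in U$ and ''no'' if $\alpha\notin U$. The marking fails iff there are states $s,t$ (possibly equal) in the same maximal strongly connected component of $\mathcal{T}_{S,f}$ such that $s$ is marked ''yes'' and $t$ is marked ''no''. *)

From mathcomp Require Import all_boot.
From Stdlib Require List.

Set Implicit Arguments.
Unset Strict Implicit.
Unset Printing Implicit Defensive.

Section Defs.
Variable Sigma : finType.

Definition word := nat -> Sigma.

Definition catw (w : seq Sigma) (a : word) : word :=
  fun n => if n < size w then nth (a 0) w n else a (n - size w).

(* (a :: x)^omega : the omega-power of the nonempty finite word a :: x *)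
Definition omega1 (a : Sigma) (x : seq Sigma) : word :=
  fun n => nth a (a :: x) (n %% (size x).+1).

Definition wsuffix (a : word) (k : nat) : word := fun n => a (k + n).

Definition ult_periodic (a : word) : Prop :=
  exists (u : seq Sigma) (b : Sigma) (v : seq Sigma), a =1 catw u (omega1 b v).

Definition wprefix (a : word) (n : nat) : seq Sigma := [seq a i | i <- iota 0 n].

Record dba := DBA {
  dst : finType;
  dinit : dst;
  dtrans : dst -> Sigma -> dst;
  dacc : pred dst }.

Fixpoint drun (A : dba) (a : word) (n : nat) : dst A :=
  match n with
  | 0 => dinit A
  | n.+1 => dtrans (drun A a n) (a n)
  end.

Definition dba_accepts (A : dba) (a : word) : Prop :=
  forall N, exists2 n, N <= n & dacc (drun A a n).

Definition dreach (A : dba) (p q : dst A) : Prop :=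
  exists w : seq Sigma, foldl (@dtrans A) p w = q.

Definition weak_dba (A : dba) : Prop :=
  forall p q : dst A, dreach p q -> dreach q p -> dacc p = dacc q.

Definition WDBA_recognizable (U : word -> Prop) : Prop :=
  exists A : dba, weak_dba A /\ forall a, U a <-> dba_accepts A a.

Record nba := NBA {
  nst : finType;
  ninit : pred nst;
  ntrans : nst -> Sigma -> nst -> bool;
  nacc : pred nst }.

Definition nba_accepts (B : nba) (a : word) : Prop :=
  exists r : nat -> nst B,
    [/\ @ninit B (r 0), (forall n, @ntrans B (r n) (a n) (r n.+1))
      & forall N, exists2 n, N <= n & @nacc B (r n)].

Definition omega_regular (D : word -> Prop) : Prop :=
  exists B : nba, forall a, D a <-> nba_accepts B a.

Definition trivial_right_congruence (D : word -> Prop) : Prop :=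
  forall (w : seq Sigma) (a : word), D a <-> D (catw w a).

(* S : finite set of finite words, E : finite set of infinite words,
   f : the table (a boolean function; only its values on (S u S.Sigma) x E
   matter), yes = true, no = false. *)

Definition prefix_closed (S : seq (seq Sigma)) : Prop :=
  forall s, s \in S -> forall n, take n s \in S.

Definition suffix_closed (E : list word) : Prop :=
  forall a, List.In a E -> forall k, List.In (wsuffix a k) E.

Definition observation_table (U D : word -> Prop) (S : seq (seq Sigma))
  (E : list word) (f : seq Sigma -> word -> bool) : Prop :=
  [/\ prefix_closed S,
      suffix_closed E,
      (forall a, List.In a E -> ult_periodic a),
      (forall a, List.In a E -> ~ D a)
    & (forall s a, (s \in S \/ exists2 s', s' \in S & exists c, s = rcons s' c) ->
         List.In a E -> (f s a = true <-> U (catw s a)))].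

Definition rowEq (E : list word) (f : seq Sigma -> word -> bool) (s t : seq Sigma) : bool :=
  all (fun a => f s a == f t a) E.

Definition reduced (S : seq (seq Sigma)) (E : list word) f : Prop :=
  forall s t, s \in S -> t \in S -> s != t -> ~~ rowEq E f s t.

Definition closed_table (S : seq (seq Sigma)) (E : list word) f : Prop :=
  forall s, s \in S -> forall c : Sigma, exists2 t, t \in S & rowEq E f (rcons s c) t.

(* transition function of T_{S,f}: the (unique, when reduced and closed)
   t in S with f_{s c} = f_t *)
Definition delta (S : seq (seq Sigma)) (E : list word) f (s : seq Sigma) (c : Sigma)
  : seq Sigma :=
  nth [::] S (find (rowEq E f (rcons s c)) S).

Definition deltaS S E f (s : seq Sigma) (w : seq Sigma) : seq Sigma :=
  foldl (delta S E f) s w.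

Definition InfT S E f (b : word) (q : seq Sigma) : Prop :=
  forall N, exists2 n, N <= n & deltaS S E f [::] (wprefix b n) = q.

Definition marked_yes (U : word -> Prop) S E f (q : seq Sigma) : Prop :=
  exists u a, [/\ u \in S, List.In a E, U (catw u a) & InfT S E f (catw u a) q].

Definition marked_no (U : word -> Prop) S E f (q : seq Sigma) : Prop :=
  exists u a, [/\ u \in S, List.In a E, ~ U (catw u a) & InfT S E f (catw u a) q].

Definition same_scc S E f (s t : seq Sigma) : Prop :=
  (exists z, deltaS S E f s z = t) /\ (exists w, deltaS S E f t w = s).

Definition marking_fails (U : word -> Prop) S E f : Prop :=
  exists s t, [/\ s \in S, t \in S, same_scc S E f s t,
                  marked_yes U S E f s & marked_no U S E f t].

End Defs.

(* Follow the run of T_{S,f} on u alpha, with u in S and alpha = v y^omega in E.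
   The states stay in S and, since the table is consistent, the entry f(r_k, alpha[k..])
   of the current state r_k against the remaining suffix never changes.  Sampling the
   run at the times |v| + j|y| with j = 0..|S| gives a repeated state, so from then on
   run and word are periodic with a common period Q.  A state q in Inf(u alpha), read
   at a late enough time m, therefore loops on x^omega = alpha[m..] with x = alpha[m..m+Q),
   x^omega is in E by suffix-closure, and f(q, x^omega) = f(u, alpha).  Applied to the
   yes-marked and the no-marked state of the failing component this gives the claim. *)
From mathcomp Require Import all_boot.
From mathcomp Require Import zify.
From Stdlib Require List.
From Stdlib Require Import FunctionalExtensionality.

Set Implicit Arguments.
Unset Strict Implicit.
Unset Printing Implicit Defensive.

Definition periodic_from (T : Type) (g : nat -> T) (L p : nat) : Prop :=
  forall n, L <= n -> g (n + p) = g n.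

Lemma periodic_from_mul (T : Type) (g : nat -> T) L p k :
  periodic_from g L p -> periodic_from g L (k * p).
Proof.
move=> per n Ln; elim: k => [|k IHk]; first by rewrite addn0.
by rewrite mulSn addnCA addnC per ?IHk //; lia.
Qed.

Lemma exists_collision (T : eqType) (g : nat -> T) (S : seq T) :
  (forall j, g j \in S) -> exists i j, i < j /\ g i = g j.
Proof.
move=> gS; pose s := [seq g j | j <- iota 0 (size S).+1].
have /(uniqPn (g 0)) [i [j [lt_ij lt_j]]] : ~~ uniq s.
  have sub_sS : {subset s <= S} by move=> _ /mapP[j _ ->].
  by apply/negP => /uniq_leq_size/(_ sub_sS); rewrite size_map size_iota ltnn.
rewrite size_map size_iota in lt_j.
rewrite !(nth_map 0) ?size_iota ?(ltn_trans lt_ij) // !nth_iota ?(ltn_trans lt_ij) //.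
by exists i, j.
Qed.

Section Words.
Variable Sigma : finType.
Implicit Types (a : word Sigma) (u : seq Sigma).

Lemma wsuffix0 a : wsuffix a 0 = a.
Proof. by apply: functional_extensionality. Qed.

Lemma wprefixS a k : wprefix a k.+1 = rcons (wprefix a k) (a k).
Proof. by rewrite /wprefix -addn1 iotaD map_cat cats1. Qed.

Lemma wprefix_catw u a k : wprefix (catw u a) (size u + k) = u ++ wprefix a k.
Proof.
rewrite /wprefix iotaD map_cat; congr (_ ++ _).
  rewrite -[RHS](mkseq_nth (a 0) u); apply/eq_in_map => i.
  by rewrite mem_iota /catw => /andP[_ ->].
have -> : iota (size u) k = map (addn (size u)) (iota 0 k) by rewrite -iotaDl addn0.
rewrite -map_comp; apply: eq_map => i /=.
by rewrite /catw ltnNge leq_addr addKn.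
Qed.

Lemma catw_rcons_wsuffix u a k :
  catw u (wsuffix a k) = catw (rcons u (a k)) (wsuffix a k.+1).
Proof.
apply: functional_extensionality => n; rewrite /catw size_rcons nth_rcons /wsuffix.
case: (ltngtP n (size u)) => [lt_nu|lt_un|->].
- by rewrite ltnS ltnW //; apply: set_nth_default.
- by rewrite ltnNge lt_un /=; congr a; lia.
- by rewrite ltnSn subnn addn0.
Qed.

Lemma ult_periodicP a : ult_periodic a -> exists L p, 0 < p /\ periodic_from a L p.
Proof.
move=> [v [b [y eq_a]]]; exists (size v), (size y).+1; split=> // n le_vn.
rewrite !eq_a /catw !ltnNge le_vn (leq_trans le_vn (leq_addr _ _)) /omega1.
by rewrite -addnBAC // modnDr.
Qed.

Lemma wsuffix_omega1 a L Q m : 0 < Q -> periodic_from a L Q -> L <= m ->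
  wsuffix a m = omega1 (a m) [seq a (m + k) | k <- iota 1 Q.-1].
Proof.
move=> Q_gt0 per Lm; apply: functional_extensionality => k.
rewrite /omega1 size_map size_iota prednK //.
have -> : a m :: [seq a (m + k) | k <- iota 1 Q.-1] = [seq a (m + k) | k <- iota 0 Q].
  by rewrite -(prednK Q_gt0) /= addn0.
rewrite (nth_map 0) ?size_iota ?ltn_pmod //.
rewrite nth_iota ?ltn_pmod // add0n /wsuffix {1}(divn_eq k Q) addnA -addnC addnA.
by rewrite (periodic_from_mul _ per) 1?[_ + m]addnC //; lia.
Qed.

End Words.

Section Runs.
Variables (Sigma : finType) (T : Type) (d : T -> Sigma -> T).

Definition run (r : T) (a : word Sigma) (k : nat) : T := foldl d r (wprefix a k).

Lemma runS r a k : run r a k.+1 = d (run r a k) (a k).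
Proof. by rewrite /run wprefixS -cats1 foldl_cat. Qed.

Lemma run_add r a m n : run r a (m + n) = run (run r a m) (wsuffix a m) n.
Proof. by elim: n => [|n IHn]; rewrite ?addn0 // addnS !runS IHn. Qed.

Lemma run_periodic r a L Q n1 : periodic_from a L Q -> L <= n1 ->
  run r a (n1 + Q) = run r a n1 -> periodic_from (run r a) n1 Q.
Proof.
move=> per Ln1 loop n /subnKC <-; elim: (n - n1) => [|t IHt]; first by rewrite addn0.
by rewrite addnS addSn !runS IHt per //; lia.
Qed.

End Runs.

Lemma run_eventually_periodic (Sigma : finType) (T : eqType) (d : T -> Sigma -> T)
    (S : seq T) r a L p :
  0 < p -> periodic_from a L p -> (forall k, run d r a k \in S) ->
  exists n1 Q, [/\ 0 < Q, L <= n1, periodic_from a L Q & periodic_from (run d r a) n1 Q].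
Proof.
move=> p_gt0 per run_inS.
have [i [j [lt_ij eq_ij]]] := exists_collision (fun j => run_inS (L + j * p)).
exists (L + i * p), ((j - i) * p); have per' := periodic_from_mul (j - i) per.
split; [by rewrite muln_gt0 subn_gt0 lt_ij | exact: leq_addr | exact: per' |].
apply: run_periodic per' (leq_addr _ _) _.
by rewrite -addnA -mulnDl subnKC ?(ltnW lt_ij).
Qed.

Section Table.
Variables (Sigma : finType) (S : seq (seq Sigma)) (E : list (word Sigma))
  (f : seq Sigma -> word Sigma -> bool).
Hypothesis closedS : closed_table S E f.
Implicit Types (a : word Sigma) (r s u : seq Sigma).

Lemma rowEqP s t a : rowEq E f s t -> List.In a E -> f s a = f t a.
Proof. by elim: E => //= b E' IHE /andP[/eqP eq_b row] [<-|/IHE]; auto. Qed.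

Lemma delta_in r c : r \in S -> delta S E f r c \in S.
Proof.
move=> rS; have [t tS row] := closedS rS c.
by apply: mem_nth; rewrite -has_find; apply/hasP; exists t.
Qed.

Lemma delta_row r c : r \in S -> rowEq E f (rcons r c) (delta S E f r c).
Proof.
move=> rS; have [t tS row] := closedS rS c.
by apply: (nth_find [::]); apply/hasP; exists t.
Qed.

Lemma run_in u a k : u \in S -> run (delta S E f) u a k \in S.
Proof. by move=> uS; elim: k => [|k IHk]; rewrite ?runS ?delta_in. Qed.

Lemma deltaS_nil_cat s w :
  prefix_closed S -> reduced S E f -> s \in S -> deltaS S E f [::] (s ++ w) = deltaS S E f s w.
Proof.
move=> prefS redS; rewrite /deltaS foldl_cat => sS; congr foldl; move: sS.
elim/last_ind: s => [//|s c IHs] scS.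
have sS : s \in S by have := prefS _ scS (size s); rewrite -cats1 take_size_cat.
rewrite -cats1 foldl_cat IHs //= cats1; apply/esym/eqP; apply: contraT => ne.
by have := redS _ _ scS (delta_in c sS) ne; rewrite delta_row.
Qed.

Lemma InfT_catwE u a q : prefix_closed S -> reduced S E f -> u \in S ->
  InfT S E f (catw u a) q <-> forall N, exists2 n, N <= n & run (delta S E f) u a n = q.
Proof.
move=> prefS redS uS; split=> inf N.
  have [n le_n <-] := inf (size u + N); exists (n - size u); first by lia.
  by rewrite -[run _ u a _](deltaS_nil_cat _ prefS redS uS) -wprefix_catw subnKC //; lia.
have [n le_n <-] := inf N; exists (size u + n); first exact: leq_trans le_n (leq_addl _ _).
by rewrite wprefix_catw deltaS_nil_cat.
Qed.

Lemma f_run_invariant U D u a k : observation_table U D S E f -> u \in S -> List.In a E ->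
  f (run (delta S E f) u a k) (wsuffix a k) = f u a.
Proof.
move=> [_ sufE _ _ consistent] uS aE; elim: k => [|k IHk]; first by rewrite wsuffix0.
set r := run (delta S E f) u a k; have rS : r \in S by apply: run_in.
have aE' := sufE _ aE k.+1.
rewrite runS -IHk -(rowEqP (delta_row _ rS) aE').
have U_rc : f (rcons r (a k)) (wsuffix a k.+1) <-> U (catw r (wsuffix a k)).
  by rewrite catw_rcons_wsuffix; apply: consistent aE'; right; exists r => //; exists (a k).
have U_r := consistent r _ (or_introl rS) (sufE _ aE k).
by apply/idP/idP => [/U_rc/U_r | /U_r/U_rc].
Qed.

Lemma InfT_omega_loop U D u al q :
  observation_table U D S E f -> reduced S E f -> u \in S -> List.In al E ->
  InfT S E f (catw u al) q ->
  exists c x, [/\ List.In (omega1 c x) E, InfT S E f (catw q (omega1 c x)) q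
                & f q (omega1 c x) = f u al].
Proof.
move=> tbl redS uS alE infq; have [prefS sufE ultE _ _] := tbl.
have [L [p [p_gt0 per]]] := ult_periodicP (ultE _ alE).
have [n1 [Q [Q_gt0 Ln1 perQ run_per]]] :=
  run_eventually_periodic p_gt0 per (fun k => run_in al k uS).
have [m n1m run_m] := (InfT_catwE _ _ prefS redS uS).1 infq n1.
have qS : q \in S by rewrite -run_m run_in.
exists (al m), [seq al (m + k) | k <- iota 1 Q.-1].
rewrite -(wsuffix_omega1 Q_gt0 perQ (leq_trans Ln1 n1m)); split; first exact: sufE.
  apply/(InfT_catwE _ _ prefS redS qS) => N; exists (N * Q); first by rewrite leq_pmulr.
  by rewrite -run_m -run_add (periodic_from_mul _ run_per).
by rewrite -run_m (f_run_invariant _ tbl).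
Qed.

End Table.

Theorem lemma7 (Sigma : finType) (U D : word Sigma -> Prop)
  (S : seq (seq Sigma)) (E : list (word Sigma))
  (f : seq Sigma -> word Sigma -> bool) :
  WDBA_recognizable U ->
  omega_regular D ->
  trivial_right_congruence D ->
  observation_table U D S E f ->
  reduced S E f ->
  closed_table S E f ->
  marking_fails U S E f ->
  exists (s t : seq Sigma) (z w : seq Sigma)
         (a : Sigma) (x : seq Sigma) (b : Sigma) (y : seq Sigma),
    [/\ s \in S /\ t \in S,
        deltaS S E f [::] (s ++ z) = t /\ deltaS S E f [::] (t ++ w) = s,
        List.In (omega1 a x) E /\ List.In (omega1 b y) E,
        InfT S E f (catw s (omega1 a x)) s /\ InfT S E f (catw t (omega1 b y)) t
      & f s (omega1 a x) = true /\ f t (omega1 b y) = false].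
Proof.
move=> _ _ _ tbl redS closedS [s [t [sS tS [[z st] [w ts]]
  [u [al [uS alE U_ual inf_s]]] [u' [al' [u'S al'E nU_ual' inf_t]]]]]].
have [prefS _ _ _ consistent] := tbl.
have [a [x [axE loop_s f_s]]] := InfT_omega_loop closedS tbl redS uS alE inf_s.
have [b [y [byE loop_t f_t]]] := InfT_omega_loop closedS tbl redS u'S al'E inf_t.
exists s, t, z, w, a, x, b, y; split=> //.
- by rewrite !deltaS_nil_cat.
- split; first by rewrite f_s; apply/(consistent _ _ (or_introl uS) alE).
  by rewrite f_t; apply/negbTE/negP => /(consistent _ _ (or_introl u'S) al'E).
Qed.
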